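(* Let $n\ge 3$ and let $\mathbb{F}$ be a field of characteristic $0$ or of odd prime characteristic $p$. In the group algebra $\mathbb{F}D_{2n}$: (i) the set $\{a^i-a^{-i},\ (a^i-a^{-i})b \mid i=1,2,\dots,\lfloor\frac{n-1}{2}\rfloor\}$ is an $\mathbb{F}$-basis of $\bar{C}(b)$; (ii) the set $\{a^i-a^{-i},\ a(a^i-a^{-i})b \mid i=1,2,\dots,\lfloor\frac{n-1}{2}\rfloor\}$ is an $\mathbb{F}$-basis of $\bar{C}(ab)$.
   Context: $D_{2n}=\langle a,b\mid a^n=1,\ b^2=1,\ (ab)^2=1\rangle$ is the dihedral group of order $2n$, whose elements are $a^ib^j$ with $0\le i\le n-1$, $0\le j\le 1$. $\mathbb{F}D_{2n}$ is its group algebra over $\mathbb{F}$. For $\beta\in\mathbb{F}D_{2n}$, the anti-centralizer of $\beta$ is $\bar{C}(\beta)=\{\alpha\in\mathbb{F}D_{2n}\mid \alpha\beta=-\beta\alpha\}$, an $\mathbb{F}$-subspace. $\lfloor x\rfloor$ denotes the floor of $x$. *)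

From HB Require Import structures.
From mathcomp Require Import all_boot all_algebra.
Set Implicit Arguments. Unset Strict Implicit. Unset Printing Implicit Defensive.
Import GRing.Theory.
Local Open Scope ring_scope.

(* The dihedral group D_{2n} = <a, b | a^n = b^2 = (ab)^2 = 1>, realized
   concretely: the element a^i b^j (i in Z/nZ, j in {0,1}) is the pair
   (i, j) : 'Z_n * bool.  'Z_n is Z/nZ for n >= 2 (we always assume n >= 3).
   Since b a b = a^{-1}, (a^i b^j)(a^k b^l) = a^(i + (-1)^j k) b^(j+l). *)
Definition dih (n : nat) := ('Z_n * bool)%type.

Definition dmul (n : nat) (x y : dih n) : dih n :=
  (x.1 + (if x.2 then - y.1 else y.1), x.2 (+) y.2).

Definition da (n : nat) : dih n := (1, false).
Definition db (n : nat) : dih n := (0, true).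
Definition dapow (n : nat) (i : int) : dih n := (i%:~R, false).

(* The group algebra F D_{2n}: F-valued functions on D_{2n}
   (formal F-linear combinations of group elements), with convolution
   product. *)
Definition galg (F : fieldType) (n : nat) := {ffun dih n -> F^o}.

Definition gmul (F : fieldType) (n : nat) (x y : galg F n) : galg F n :=
  [ffun g => \sum_(h : dih n) \sum_(k : dih n)
               (if dmul h k == g then x h * y k else 0)].

Definition gel (F : fieldType) (n : nat) (g : dih n) : galg F n :=
  [ffun h => if h == g then 1 else 0].

Definition anticent (F : fieldType) (n : nat) (beta alpha : galg F n) : bool :=
  gmul alpha beta == - gmul beta alpha.

Definition basis_of_anticent (F : fieldType) (n : nat) (beta : galg F n)
    (X : seq (galg F n)) : Prop :=
  free X /\ (forall alpha : galg F n, (alpha \in <<X>>%VS) = anticent beta alpha).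

From HB Require Import structures.
From mathcomp Require Import all_boot all_algebra.
From mathcomp Require Import zify ring.
Set Implicit Arguments. Unset Strict Implicit. Unset Printing Implicit Defensive.
Import GRing.Theory.
Local Open Scope ring_scope.

(* Coefficients split an element alpha of F D_2n into two functions on 'Z_n,
   alpha(a^k) and alpha(a^k b).  Since b a^k = a^-k b, right and left
   multiplication by b (resp. ab) permute group elements, and alpha
   anticommutes with b (resp. ab) iff k |-> alpha(a^k) and
   k |-> alpha(a^(k+s) b) are odd, with s = 0 (resp. s = 1).  When 2 != 0 in F,
   the odd functions on 'Z_n have the basis [k = i] - [k = -i],
   1 <= i <= (n-1)/2, and these two families of basis functions are exactly
   the coefficient functions of a^i - a^-i and a^s (a^i - a^-i) b. *)

Section PairedFamily.
Variables (F : fieldType) (V : vectType F) (P Q : nat -> V) (m : nat).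

Let X := map P (iota 1 m) ++ map Q (iota 1 m).

Lemma size_paired : size X = (m + m)%N.
Proof. by rewrite size_cat !size_map size_iota. Qed.

Lemma paired_sum (k : nat -> F) :
  \sum_(i < size X) k i *: X`_i =
  \sum_(j < m) (k j *: P j.+1 + k (m + j)%N *: Q j.+1).
Proof.
rewrite -(big_mkord xpredT (fun i => k i *: X`_i)) size_paired big_mkord.
rewrite big_split_ord big_split /=; congr (_ + _); apply: eq_bigr => j _.
  by rewrite nth_cat size_map size_iota ltn_ord (nth_map 0) ?size_iota //
    nth_iota // add1n.
rewrite nth_cat size_map size_iota ltnNge leq_addr /= addKn.
by rewrite (nth_map 0) ?size_iota // nth_iota // add1n.
Qed.

Lemma free_paired :
  (forall c d : nat -> F, \sum_(j < m) (c j *: P j.+1 + d j *: Q j.+1) = 0 ->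
     forall j, (j < m)%N -> c j = 0 /\ d j = 0) ->
  free X.
Proof.
move=> indep; suff: free (in_tuple X) by [].
apply/freeP => k sum_k0 i.
pose k' (j : nat) : F := if insub j is Some o then k o else 0.
have k'E (o : 'I_(size X)) : k' o = k o by rewrite /k' valK.
have /(indep k' (fun j => k' (m + j)%N)) k'0 :
    \sum_(j < m) (k' j *: P j.+1 + k' (m + j)%N *: Q j.+1) = 0.
  by rewrite -paired_sum -[RHS]sum_k0; apply: eq_bigr => o _; rewrite k'E.
have lt_i : (i < m + m)%N by rewrite -size_paired.
rewrite -k'E.
case: (ltnP i m) => [/k'0[] //| le_m_i].
by rewrite -(subnKC le_m_i); case: (k'0 (i - m)%N) => //; lia.
Qed.

Lemma span_paired (S : pred V) :
  S 0 -> (forall a u v, S u -> S v -> S (a *: u + v)) ->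
  (forall i, S (P i)) -> (forall i, S (Q i)) ->
  (forall v, S v -> exists c d : nat -> F,
     v = \sum_(j < m) (c j *: P j.+1 + d j *: Q j.+1)) ->
  forall v, (v \in <<X>>%VS) = S v.
Proof.
move=> S0 Slin SP SQ Sexpand v.
have SX x : x \in X -> S x by rewrite mem_cat => /orP[] /mapP[i _ ->].
apply/idP/idP => [/coord_span -> | /Sexpand[c [d ->]]].
  apply: (big_ind S) => // [u w Su Sw | j _]; first by rewrite -[u]scale1r Slin.
  by rewrite -[_ *: _]addr0 Slin //; apply/SX/mem_nth; rewrite size_paired.
apply: rpred_sum => j _; rewrite rpredD ?rpredZ // memv_span // mem_cat map_f
  ?orbT // mem_iota; have := ltn_ord j; lia.
Qed.

End PairedFamily.

Section GroupAlgebra.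
Variables (F : fieldType) (n : nat).

Definition dinv (g : dih n) : dih n := (if g.2 then g.1 else - g.1, g.2).

Lemma dmulK (g : dih n) :
  cancel (fun h => dmul h g) (fun h => dmul h (dinv g)).
Proof.
by case: g => y t [x s]; case: s; case: t; congr pair; rewrite /=; ring.
Qed.

Lemma dmulKV (g : dih n) :
  cancel (fun h => dmul h (dinv g)) (fun h => dmul h g).
Proof.
by case: g => y t [x s]; case: s; case: t; congr pair; rewrite /=; ring.
Qed.

Lemma dmulKl (g : dih n) : cancel (dmul g) (dmul (dinv g)).
Proof.
by case: g => y t [x s]; case: s; case: t; congr pair; rewrite /=; ring.
Qed.

Lemma dmulKVl (g : dih n) : cancel (dmul (dinv g)) (dmul g).
Proof.
by case: g => y t [x s]; case: s; case: t; congr pair; rewrite /=; ring.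
Qed.

Lemma gelE (g h : dih n) : gel F g h = if h == g then 1 else 0.
Proof. by rewrite ffunE. Qed.

Lemma gmul_gelr (x : galg F n) g :
  gmul x (gel F g) = [ffun h => x (dmul h (dinv g))].
Proof.
apply/ffunP => h; rewrite !ffunE (bigD1 (dmul h (dinv g))) //=.
rewrite [X in _ + X]big1 ?addr0 => [|h' /negPf h'_h].
  rewrite (bigD1 g) //= [X in _ + X]big1 ?addr0 => [|k /negPf k_g].
    by rewrite dmulKV eqxx gelE eqxx mulr1.
  by rewrite gelE k_g mulr0 if_same.
apply: big1 => k _; rewrite gelE.
have [-> | _] := eqVneq k g; last by rewrite mulr0 if_same.
by rewrite (can2_eq (dmulK g) (dmulKV g)) h'_h.
Qed.

Lemma gmul_gell (x : galg F n) g :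
  gmul (gel F g) x = [ffun h => x (dmul (dinv g) h)].
Proof.
apply/ffunP => h; rewrite !ffunE (bigD1 g) //=.
rewrite [X in _ + X]big1 ?addr0 => [|h' /negPf h'_g].
  rewrite (bigD1 (dmul (dinv g) h)) //= [X in _ + X]big1 ?addr0
    => [|k /negPf k_h].
    by rewrite dmulKVl eqxx gelE eqxx mul1r.
  by rewrite (can2_eq (dmulKl g) (dmulKVl g)) k_h.
by apply: big1 => k _; rewrite gelE h'_g mul0r if_same.
Qed.

Lemma anticent_gelP g (alpha : galg F n) :
  reflect (forall h, alpha (dmul h (dinv g)) = - alpha (dmul (dinv g) h))
          (anticent (gel F g) alpha).
Proof.
rewrite /anticent gmul_gelr gmul_gell; apply: (iffP eqP) => [E h | E].
  by move/ffunP: E => /(_ h); rewrite !ffunE.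
by apply/ffunP => h; rewrite !ffunE E.
Qed.

End GroupAlgebra.

Section OddFunctions.
Variables (F : fieldType) (n : nat).
Hypothesis n_gt2 : (2 < n)%N.
Let n_gt1 : (1 < n)%N. Proof. exact: ltnW. Qed.

Let m := ((n - 1) %/ 2)%N.
Let m_lt : (m + m < n)%N. Proof. rewrite /m; lia. Qed.
Let n_le : (n <= m + m + 2)%N. Proof. rewrite /m; lia. Qed.

Lemma val_Zn_lt (k : 'Z_n) : (val k < n)%N.
Proof. by have := ltn_ord k; rewrite [X in (_ < X)%N -> _]Zp_cast //; lia. Qed.

Lemma eq_natr_Zn x y :
  (x < n)%N -> (y < n)%N -> ((x%:R : 'Z_n) == y%:R) = (x == y).
Proof. by move=> xn yn; rewrite -val_eqE /= !val_Zp_nat // !modn_small. Qed.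

Lemma oppr_natr_Zn y : (y <= n)%N -> - (y%:R : 'Z_n) = (n - y)%:R.
Proof.
by move=> yn; apply/eqP; rewrite eq_sym -addr_eq0 -natrD subnK // pchar_Zp.
Qed.

Definition odd_fun (f : 'Z_n -> F) := forall k, f (- k) = - f k.

(* The coefficients of a^i - a^-i on the rotations a^k, indexed by k : 'Z_n. *)
Definition odd_delta (i : nat) (k : 'Z_n) : F :=
  (if k == i%:R then 1 else 0) - (if k == - i%:R then 1 else 0).

Lemma odd_deltaN i : odd_fun (odd_delta i).
Proof. by move=> k; rewrite /odd_delta !eqr_oppLR opprK opprB. Qed.

Lemma odd_delta_selfopp i k : k = - k -> odd_delta i k = 0.
Proof. by move=> kN; rewrite /odd_delta {2}kN eqr_opp subrr. Qed.

Lemma odd_delta_natr i l : (i < m)%N -> (l < m)%N ->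
  odd_delta i.+1 l.+1%:R = (if l == i then 1 else 0).
Proof.
move=> im lm; rewrite /odd_delta oppr_natr_Zn 1?eqSS ?eq_natr_Zn; try lia.
have -> : (l.+1 == n - i.+1)%N = false by lia.
by rewrite eqSS subr0.
Qed.

Lemma Zn_cases (k : 'Z_n) :
  [\/ exists2 l, (l < m)%N & k = l.+1%:R,
      exists2 l, (l < m)%N & k = - l.+1%:R
    | k = - k].
Proof.
have kE : k = (val k)%:R by rewrite natr_Zp.
have := val_Zn_lt k; case: (posnP (val k)) => [k0 _ | k_gt0 kn].
  by apply: Or33; rewrite kE k0 oppr0.
case: (leqP (val k) m) => [km | mk].
  by apply: Or31; exists (val k).-1; [lia | rewrite prednK].
case: (leqP (n - m) (val k)) => [nmk | kmn].
  apply: Or32; exists (n - val k).-1; first lia.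
  by rewrite prednK ?oppr_natr_Zn ?subKn -?kE //; lia.
apply: Or33; apply/eqP; rewrite -addr_eq0 kE -natrD.
have -> : (val k + val k)%N = n by lia.
by rewrite pchar_Zp.
Qed.

Lemma sum_odd_delta_natr (c : nat -> F) l : (l < m)%N ->
  \sum_(j < m) c j * odd_delta j.+1 l.+1%:R = c l.
Proof.
move=> lm; rewrite (bigD1 (Ordinal lm)) //= big1 => [|j /negPf jl].
  by rewrite odd_delta_natr // eqxx mulr1 addr0.
by move: jl; rewrite -val_eqE odd_delta_natr // eq_sym => ->; rewrite mulr0.
Qed.

(* At the self-opposite points k = -k (k = 0, and k = n/2 for even n) every
   [odd_delta] vanishes, and so does [f] because 2 != 0. *)
Lemma odd_fun_expand (f : 'Z_n -> F) k : (2%:R : F) != 0 -> odd_fun f ->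
  \sum_(j < m) f j.+1%:R * odd_delta j.+1 k = f k.
Proof.
move=> two_neq0 f_odd; case: (Zn_cases k) => [[l lm ->] | [l lm ->] | kN].
- exact: (sum_odd_delta_natr (fun j => f j.+1%:R)).
- under eq_bigr do rewrite odd_deltaN mulrN.
  by rewrite sumrN (sum_odd_delta_natr (fun j => f j.+1%:R)) ?f_odd.
- rewrite big1 => [|j _]; last by rewrite odd_delta_selfopp ?mulr0.
  apply/eqP; move: (f_odd k); rewrite -kN => /eqP; rewrite -addr_eq0.
  by rewrite -mulr2n -mulr_natl mulf_eq0 (negPf two_neq0) eq_sym.
Qed.

End OddFunctions.

Section AntiCentralizer.
Variables (F : fieldType) (n : nat).
Hypotheses (n_gt2 : (2 < n)%N) (two_neq0 : (2%:R : F) != 0).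

Let m := ((n - 1) %/ 2)%N.

Definition adiff i : galg F n := gel F (dapow n i%:Z) - gel F (dapow n (- i%:Z)).

(* a^s (a^i - a^-i) b *)
Definition adiffb (s : 'Z_n) i : galg F n :=
  [ffun g => if g.2 then odd_delta F i (g.1 - s) else 0].

Definition odd_pair (s : 'Z_n) (alpha : galg F n) :=
  odd_fun (fun k => alpha (k, false)) /\ odd_fun (fun k => alpha (k + s, true)).

Lemma adiffE i k j : adiff i (k, j) = if j then 0 else odd_delta F i k.
Proof.
rewrite /adiff !ffunE /dapow /odd_delta !xpair_eqE intrN -pmulrn.
by case: j; rewrite /= ?andbT ?andbF ?subrr.
Qed.

Lemma adiffbE s i k j :
  adiffb s i (k, j) = if j then odd_delta F i (k - s) else 0.
Proof. by rewrite ffunE. Qed.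

Lemma gmul_adiff_db i : gmul (adiff i) (gel F (db n)) = adiffb 0 i.
Proof.
apply/ffunP => -[k j]; rewrite gmul_gelr ffunE adiffbE adiffE subr0.
by case: j; rewrite /= ?oppr0 ?addr0.
Qed.

Lemma gmul_da_adiff_db i :
  gmul (gmul (gel F (da n)) (adiff i)) (gel F (db n)) = adiffb 1 i.
Proof.
apply/ffunP => -[k j]; rewrite gmul_gelr ffunE gmul_gell ffunE adiffbE adiffE.
by case: j; rewrite /= ?oppr0 ?addr0 // addrC.
Qed.

Lemma anticent_db alpha : anticent (gel F (db n)) alpha <-> odd_pair 0 alpha.
Proof.
split => [/anticent_gelP E | [E0 E1]].
  split => k; have := E (- k, true); have := E (- k, false); rewrite /dmul /=.
    by rewrite !(addr0, subr0, sub0r, opprK) => Et Ef; rewrite ?Et ?Ef.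
  by rewrite !(addr0, subr0, sub0r, opprK) => Et Ef; rewrite ?Et ?Ef.
apply/anticent_gelP => -[k []]; rewrite /dmul /= !(addr0, subr0, sub0r).
  by have := E0 k; rewrite /= => ->; rewrite opprK.
by have := E1 k; rewrite /= !addr0 => ->; rewrite opprK.
Qed.

Lemma anticent_dadb alpha :
  anticent (gel F (dmul (da n) (db n))) alpha <-> odd_pair 1 alpha.
Proof.
split => [/anticent_gelP E | [E0 E1]].
  split => k.
    have := E (- k + 1, true); rewrite /dmul /= addr0 addrK.
    by have -> : 1 - (- k + 1) = k by ring.
  have := E (- k, false); rewrite /dmul /= addr0 => ->.
  by rewrite opprK addrC.
apply/anticent_gelP => -[k []]; rewrite /dmul /= !addr0.
  by rewrite -[1 - k]opprB; have := E0 (k - 1); rewrite /= => ->; rewrite opprK.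
by have := E1 k; rewrite /= addrC => ->; rewrite opprK.
Qed.

Section AdiffSums.
Variables (s : 'Z_n) (c d : nat -> F).

Let sigma := \sum_(j < m) (c j *: adiff j.+1 + d j *: adiffb s j.+1).

Lemma sum_adiff_false k :
  sigma (k, false) = \sum_(j < m) c j * odd_delta F j.+1 k.
Proof.
rewrite sum_ffunE; apply: eq_bigr => j _.
by rewrite ffunE [X in X + _]ffunE [X in _ + X]ffunE adiffE adiffbE scaler0 addr0.
Qed.

Lemma sum_adiff_true k :
  sigma (k + s, true) = \sum_(j < m) d j * odd_delta F j.+1 k.
Proof.
rewrite sum_ffunE; apply: eq_bigr => j _.
rewrite ffunE [X in X + _]ffunE [X in _ + X]ffunE adiffE adiffbE addrK.
by rewrite scaler0 add0r.
Qed.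

End AdiffSums.

Lemma basis_odd_pair s (S : pred (galg F n)) :
  (forall alpha, S alpha <-> odd_pair s alpha) ->
  let X := map adiff (iota 1 m) ++ map (adiffb s) (iota 1 m) in
  free X /\ forall v, (v \in <<X>>%VS) = S v.
Proof.
move=> SE; split.
  apply: free_paired => c d sum0 l lm.
  by rewrite -(sum_odd_delta_natr n_gt2 c lm) -(sum_odd_delta_natr n_gt2 d lm)
    -(sum_adiff_false s c d) -(sum_adiff_true s c d) sum0 !ffunE.
apply: span_paired => [||i|i|v].
- by apply/SE; split=> k; rewrite !ffunE oppr0.
- move=> a u v /SE[u0 u1] /SE[v0 v1]; apply/SE; split=> k.
    have := u0 k; have := v0 k; rewrite /= !ffunE => -> ->.
    by rewrite opprD scalerN.
  have := u1 k; have := v1 k; rewrite /= !ffunE => -> ->.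
  by rewrite opprD scalerN.
- by apply/SE; split=> k; rewrite !adiffE ?oppr0 ?odd_deltaN.
- by apply/SE; split=> k; rewrite !adiffbE ?oppr0 ?addrK ?odd_deltaN.
move=> /SE[v0 v1].
pose c j := v (j.+1%:R, false); pose d j := v (j.+1%:R + s, true); exists c, d.
apply/ffunP => -[k []].
  rewrite -(subrK s k) -(odd_fun_expand n_gt2 _ two_neq0 v1).
  exact/esym/(sum_adiff_true s c d).
rewrite -(odd_fun_expand n_gt2 _ two_neq0 v0).
exact/esym/(sum_adiff_false s c d).
Qed.

End AntiCentralizer.

Theorem lemma3p2 (F : fieldType) (n : nat) (hn : (3 <= n)%N)
  (hchar : [pchar F] =i pred0 \/
           exists p : nat, [/\ prime p, odd p & p \in [pchar F]]) :
  let A (i : nat) : galg F n := gel F (dapow n i%:Z) - gel F (dapow n (- i%:Z)) in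
  let idx := iota 1 ((n - 1) %/ 2) in
  basis_of_anticent (gel F (db n))
    ([seq A i | i <- idx] ++ [seq gmul (A i) (gel F (db n)) | i <- idx])
  /\
  basis_of_anticent (gel F (dmul (da n) (db n)))
    ([seq A i | i <- idx] ++
     [seq gmul (gmul (gel F (da n)) (A i)) (gel F (db n)) | i <- idx]).
Proof.
move=> A idx.
have two_neq0 : (2%:R : F) != 0.
  suff : 2 \notin [pchar F] by rewrite inE.
  case: hchar => [-> // | [p [_ p_odd /pcharf_eq ->]]].
  by apply: contraL p_odd => /eqP <-.
have -> : [seq gmul (A i) (gel F (db n)) | i <- idx] = map (adiffb F 0) idx.
  by apply: eq_map => i; exact: gmul_adiff_db.
have -> : [seq gmul (gmul (gel F (da n)) (A i)) (gel F (db n)) | i <- idx] =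
          map (adiffb F 1) idx.
  by apply: eq_map => i; exact: gmul_da_adiff_db.
split; apply: basis_odd_pair => //; [exact: anticent_db | exact: anticent_dadb].
Qed.
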